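(* Let $p, r \in \mathbb N$ and $S(p,r,1):=\sum_{n=1}^\infty \frac{(-1)^{n+1}H_n^{(p)}}{n+r}$. Then \begin{align*} S(p,r,1) &=(-1)^{r}S_{p,1}^{+,-}+(-1)^{r-1}\overline{\zeta}(p+1) +\sum_{j=1}^{p}(-1)^{p-j+r}\overline{\zeta}(j)\overline{H}_{r-1}^{(p-j+1)}\\ &\quad +(-1)^{p+r-1}\overline{\zeta}(1)H_{r-1}^{(p)} +(-1)^{p+r}\sum_{n=1}^{r-1}\frac{\overline{H}_{n}}{n^{p}}\,. \end{align*}
   Context: $H_n^{(q)}=\sum_{j=1}^n j^{-q}$, $\overline{H}_n^{(q)}=\sum_{j=1}^n (-1)^{j-1}j^{-q}$, $\overline{H}_n=\overline{H}_n^{(1)}$, with value $0$ for $n=0$. $\overline{\zeta}(s)=\sum_{n\ge1}(-1)^{n-1}n^{-s}$, so $\overline{\zeta}(1)=\log2$. $S_{p,q}^{+,-}:=\sum_{n=1}^\infty (-1)^{n-1}H_n^{(p)}/n^q$. Empty sums are $0$. *)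

From Stdlib Require Import Reals.
From Coquelicot Require Import Coquelicot.
Open Scope R_scope.

(* Finite sum  \sum_{j=lo}^{hi} f j  (empty, i.e. 0, when hi < lo). *)
Definition fsum (f : nat -> R) (lo hi : nat) : R := sum_n_m f lo hi.

Fixpoint H (q n : nat) : R :=
  match n with
  | O => 0
  | S m => H q m + / (INR n) ^ q
  end.

Fixpoint Hbar (q n : nat) : R :=
  match n with
  | O => 0
  | S m => Hbar q m + (-1) ^ m / (INR n) ^ q
  end.

Definition zetabar (s : nat) : R :=
  Series (fun k : nat => (-1) ^ k / (INR (k + 1)) ^ s).

Definition Spm (p q : nat) : R :=
  Series (fun k : nat => (-1) ^ k * H p (k + 1) / (INR (k + 1)) ^ q).

Definition S_term (p r : nat) (k : nat) : R :=
  (-1) ^ (k + 1 + 1) * H p (k + 1) / (INR (k + 1) + INR r).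

From Stdlib Require Import Reals Lra Lia.
From Coquelicot Require Import Coquelicot.
Open Scope R_scope.

(* Shifting the summation index gives the recurrence
   S(p,r+1) = -S(p,r) + B(p,r)  with  B(p,r) = sum_{n>=1} (-1)^(n-1) / (n^p (n+r)),
   starting from S(p,0) = S_{p,1}^{+,-}.  Here B(p,0) = zetabar(p+1), while for r >= 1
   the partial fraction expansion of 1 / (n^p (n+r)) in n expresses B(p,r) through
   zetabar(1), ..., zetabar(p) and sum_{n>=1} (-1)^(n-1) / (n+r) = (-1)^r (zetabar(1) - Hbar_r).
   Unrolling the recurrence gives the closed form.  All series converge by the
   alternating series test; for S(p,0) this uses that H_n^(p) / n decreases to 0. *)

Lemma fsum_zero lo hi : fsum (fun _ => 0) lo hi = 0.
Proof. exact (sum_n_m_const_zero lo hi). Qed.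

Lemma fsum_empty (f : nat -> R) lo hi : (hi < lo)%nat -> fsum f lo hi = 0.
Proof. intros Hlt. exact (sum_n_m_zero f lo hi Hlt). Qed.

Lemma fsum_S (f : nat -> R) lo hi :
  (lo <= S hi)%nat -> fsum f lo (S hi) = fsum f lo hi + f (S hi).
Proof. intros Hle. exact (sum_n_Sm f lo hi Hle). Qed.

Lemma fsum_ext (f g : nat -> R) lo hi :
  (forall j, (lo <= j <= hi)%nat -> f j = g j) -> fsum f lo hi = fsum g lo hi.
Proof. exact (sum_n_m_ext_loc f g lo hi). Qed.

Lemma fsum_plus (f g : nat -> R) lo hi :
  fsum (fun j => f j + g j) lo hi = fsum f lo hi + fsum g lo hi.
Proof. exact (sum_n_m_plus f g lo hi). Qed.

Lemma fsum_scal (c : R) (f : nat -> R) lo hi :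
  fsum (fun j => c * f j) lo hi = c * fsum f lo hi.
Proof. exact (sum_n_m_mult_l c f lo hi). Qed.

Lemma fsum_opp (f : nat -> R) lo hi : fsum (fun j => - f j) lo hi = - fsum f lo hi.
Proof.
  rewrite (fsum_ext _ (fun j => -1 * f j)) by (intros; ring).
  rewrite fsum_scal. ring.
Qed.

(* Coquelicot's [is_series_ext] states its equations in the carrier of
   [R_NormedModule], where [ring] and [field] do not recognise them. *)
Lemma is_series_ext_R (a b : nat -> R) (l : R) :
  (forall n, a n = b n) -> is_series a l -> is_series b l.
Proof. exact (is_series_ext a b l). Qed.

Lemma is_series_zero : is_series (fun _ => 0) 0.
Proof.
  apply (filterlim_ext (fun _ => 0)); [|apply filterlim_const].
  intros n. symmetry. exact (fsum_zero 0 n).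
Qed.

Lemma is_series_shift (a : nat -> R) (l : R) :
  is_series a l -> is_series (fun k => a (S k)) (l - a O).
Proof.
  intros Ha. apply is_series_incr_1. unfold plus; simpl.
  replace (l - a O + a O) with l by ring. exact Ha.
Qed.

Lemma is_series_fsum (f : nat -> nat -> R) (v : nat -> R) lo hi :
  (forall j, (lo <= j <= hi)%nat -> is_series (f j) (v j)) ->
  is_series (fun k => fsum (fun j => f j k) lo hi) (fsum v lo hi).
Proof.
  induction hi as [|hi IH]; intros Hf.
  - destruct lo as [|lo].
    + unfold fsum. rewrite sum_n_n.
      apply (is_series_ext_R (f O)); [intros k; rewrite sum_n_n; reflexivity|].
      apply Hf; lia.
    + rewrite fsum_empty by lia.
      apply (is_series_ext_R (fun _ => 0)); [|exact is_series_zero].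
      intros k. rewrite fsum_empty by lia. reflexivity.
  - destruct (Nat.le_gt_cases lo (S hi)) as [Hle|Hgt].
    + rewrite fsum_S by exact Hle.
      apply (is_series_ext_R (fun k => fsum (fun j => f j k) lo hi + f (S hi) k)).
      * intros k. rewrite fsum_S by exact Hle. reflexivity.
      * apply (is_series_plus _ _ (fsum v lo hi) (v (S hi))).
        -- apply IH. intros j Hj. apply Hf. lia.
        -- apply Hf. lia.
    + rewrite fsum_empty by lia.
      apply (is_series_ext_R (fun _ => 0)); [|exact is_series_zero].
      intros k. rewrite fsum_empty by lia. reflexivity.
Qed.

Lemma ex_series_alternating (u : nat -> R) :
  (forall n, u (S n) <= u n) -> is_lim_seq u 0 ->
  ex_series (fun n => (-1) ^ n * u n).
Proof.
  intros Hdecr Hlim. apply is_lim_seq_Reals in Hlim.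
  destruct (alternated_series u Hdecr Hlim) as [l Hl].
  exists l. apply is_series_Reals. exact Hl.
Qed.

Lemma INR_add_1_pos k : 0 < INR (k + 1).
Proof. rewrite plus_INR. simpl. pose proof (pos_INR k). lra. Qed.

Lemma is_lim_seq_inv_pow j :
  (1 <= j)%nat -> is_lim_seq (fun k => / INR (k + 1) ^ j) 0.
Proof.
  intros Hj.
  assert (Hinv : is_lim_seq (fun k => / INR (k + 1)) 0).
  { assert (H0 : is_lim_seq (fun n => / INR n) (Rbar_inv p_infty))
      by (apply is_lim_seq_inv; [exact is_lim_seq_INR|discriminate]).
    apply is_lim_seq_incr_1 in H0.
    apply (is_lim_seq_ext (fun n => / INR (S n))); [|exact H0].
    intros n. rewrite Nat.add_1_r. reflexivity. }
  apply (is_lim_seq_le_le (fun _ => 0) _ (fun k => / INR (k + 1)));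
    [|apply is_lim_seq_const|exact Hinv].
  intros k. pose proof (INR_add_1_pos k) as Hk. split.
  - left. apply Rinv_0_lt_compat, pow_lt, Hk.
  - apply Rinv_le_contravar; [exact Hk|].
    rewrite <- (pow_1 (INR (k + 1))) at 1. apply Rle_pow; [|exact Hj].
    rewrite plus_INR. simpl. pose proof (pos_INR k). lra.
Qed.

Lemma is_series_zetabar j :
  (1 <= j)%nat -> is_series (fun k => (-1) ^ k / INR (k + 1) ^ j) (zetabar j).
Proof.
  intros Hj. apply Series_correct.
  apply (ex_series_ext (fun k => (-1) ^ k * / INR (k + 1) ^ j)); [reflexivity|].
  apply ex_series_alternating; [|exact (is_lim_seq_inv_pow j Hj)].
  intros n. pose proof (INR_add_1_pos n) as Hn.
  apply Rinv_le_contravar; [apply pow_lt, Hn|].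
  apply pow_incr. rewrite !Nat.add_1_r in *. rewrite (S_INR (S n)). split; lra.
Qed.

Lemma H_S q n : H q (S n) = H q n + / INR (S n) ^ q.
Proof. reflexivity. Qed.

Lemma Hbar_S q n : Hbar q (S n) = Hbar q n + (-1) ^ n / INR (S n) ^ q.
Proof. reflexivity. Qed.

Lemma H_S_sum_f_R0 q n : H q (S n) = sum_f_R0 (fun k => / INR (k + 1) ^ q) n.
Proof.
  induction n as [|n IH]; [simpl; ring|].
  rewrite H_S, IH. simpl sum_f_R0. rewrite Nat.add_1_r. reflexivity.
Qed.

Lemma H_S_ge_1 q n : 1 <= H q (S n).
Proof.
  induction n as [|n IH]; [simpl; rewrite pow1; lra|].
  rewrite H_S. pose proof (INR_add_1_pos (S n)) as Hn. rewrite Nat.add_1_r in Hn.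
  pose proof (Rinv_0_lt_compat _ (pow_lt _ q Hn)). lra.
Qed.

Lemma H_div_decreasing p n :
  (1 <= p)%nat -> H p (S (S n)) / INR (S (S n)) <= H p (S n) / INR (S n).
Proof.
  intros Hp. rewrite H_S, (S_INR (S n)).
  set (m := INR (S n)). set (h := H p (S n)).
  assert (Hm : 0 < m) by (unfold m; rewrite S_INR; pose proof (pos_INR n); lra).
  assert (Hh : 1 <= h) by apply H_S_ge_1.
  assert (Hpow : 0 < (m + 1) ^ p) by (apply pow_lt; lra).
  assert (Hx : m * / (m + 1) ^ p <= 1).
  { apply (Rmult_le_reg_r ((m + 1) ^ p)); [exact Hpow|].
    rewrite Rmult_assoc, Rinv_l, Rmult_1_r, Rmult_1_l by lra.
    apply Rle_trans with ((m + 1) ^ 1); [simpl; lra|].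
    apply Rle_pow; [lra|exact Hp]. }
  replace (h / m) with ((h + / (m + 1) ^ p) / (m + 1) + (h - m * / (m + 1) ^ p) / (m * (m + 1)))
    by (field; lra).
  assert (0 <= (h - m * / (m + 1) ^ p) / (m * (m + 1))) by (apply Rdiv_le_0_compat; nra).
  lra.
Qed.

Lemma is_lim_seq_H_div p :
  (1 <= p)%nat -> is_lim_seq (fun k => H p (k + 1) / INR (k + 1)) 0.
Proof.
  intros Hp. apply is_lim_seq_Reals.
  (* [H p n / n] is the Cesaro mean of [1 / k ^ p]. *)
  pose proof (Cesaro_1 _ 0 (proj1 (is_lim_seq_Reals _ 0) (is_lim_seq_inv_pow p Hp))) as Hc.
  intros e He. destruct (Hc e He) as [N HN]. exists N. intros n Hn.
  specialize (HN (S n) ltac:(lia)). simpl pred in HN.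
  rewrite <- H_S_sum_f_R0 in HN. rewrite Nat.add_1_r. exact HN.
Qed.

Lemma is_series_Spm p :
  (1 <= p)%nat -> is_series (fun k => (-1) ^ k * H p (k + 1) / INR (k + 1) ^ 1) (Spm p 1).
Proof.
  intros Hp. apply Series_correct.
  apply (ex_series_ext (fun k => (-1) ^ k * (H p (k + 1) / INR (k + 1)))).
  { intros k. rewrite pow_1. symmetry. apply Rmult_assoc. }
  apply ex_series_alternating; [|exact (is_lim_seq_H_div p Hp)].
  intros n. rewrite !Nat.add_1_r. exact (H_div_decreasing p n Hp).
Qed.

Lemma pow_m1_mult_self n : (-1) ^ n * (-1) ^ n = 1.
Proof. rewrite <- Rpow_mult_distr. replace (-1 * -1) with 1 by ring. apply pow1. Qed.

Lemma pow_m1_add_2 n : (-1) ^ (n + 1 + 1) = (-1) ^ n.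
Proof. rewrite !pow_add. simpl. ring. Qed.

Lemma is_series_alt_inv_add r :
  is_series (fun k => (-1) ^ k / (INR (k + 1) + INR r))
    ((-1) ^ r * (zetabar 1 - Hbar 1 r)).
Proof.
  induction r as [|r IH].
  - apply (is_series_ext_R (fun k => (-1) ^ k / INR (k + 1) ^ 1)).
    + intros k. rewrite pow_1, Rplus_0_r. reflexivity.
    + replace ((-1) ^ 0 * (zetabar 1 - Hbar 1 0)) with (zetabar 1) by (simpl; ring).
      apply is_series_zetabar. lia.
  - apply is_series_shift in IH.
    apply (is_series_opp _ _) in IH.
    apply (is_series_ext_R (fun k => - ((-1) ^ S k / (INR (S k + 1) + INR r)))).
    + intros k. rewrite Nat.add_succ_l, !S_INR. simpl pow.
      pose proof (INR_add_1_pos k). pose proof (pos_INR r). field. lra.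
    + replace ((-1) ^ S r * (zetabar 1 - Hbar 1 (S r)))
        with (- ((-1) ^ r * (zetabar 1 - Hbar 1 r) - (-1) ^ 0 / (INR (0 + 1) + INR r))).
      * exact IH.
      * rewrite Hbar_S, S_INR. simpl pow. simpl (INR (0 + 1)).
        pose proof (pos_INR r). pose proof (pow_m1_mult_self r) as Hsq.
        transitivity (-1 * (-1) ^ r * (zetabar 1 - Hbar 1 r) + (-1) ^ r * (-1) ^ r / (INR r + 1)).
        -- rewrite Hsq. field. lra.
        -- field. lra.
Qed.

Lemma inv_pow_mul_partial_fractions (m c : R) p :
  m <> 0 -> c <> 0 -> m + c <> 0 ->
  / (m ^ p * (m + c)) =
  fsum (fun j => (-1) ^ (p - j) / c ^ (p - j + 1) * / m ^ j) 1 p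
  + (-1) ^ p / c ^ p * / (m + c).
Proof.
  intros Hm Hc Hmc. induction p as [|p IH].
  - rewrite fsum_empty by lia. simpl. field. exact Hmc.
  - assert (Hmp : m ^ p <> 0) by (apply pow_nonzero; exact Hm).
    assert (Hcp : c ^ p <> 0) by (apply pow_nonzero; exact Hc).
    rewrite fsum_S, Nat.sub_diag by lia.
    rewrite (fsum_ext _ (fun j => - / c * ((-1) ^ (p - j) / c ^ (p - j + 1) * / m ^ j))).
    2:{ intros j Hj. replace (S p - j)%nat with (S (p - j)) by lia. simpl pow.
        field. repeat split; try apply pow_nonzero; auto. }
    rewrite fsum_scal. set (T := fsum _ 1 p) in *.
    replace T with (/ (m ^ p * (m + c)) - (-1) ^ p / c ^ p * / (m + c)) by lra.
    simpl pow. field. auto.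
Qed.

Definition B_term (p r k : nat) : R :=
  (-1) ^ k / (INR (k + 1) ^ p * (INR (k + 1) + INR r)).

Lemma is_series_B_term_0 p : is_series (B_term p 0) (zetabar (p + 1)).
Proof.
  apply (is_series_ext_R (fun k => (-1) ^ k / INR (k + 1) ^ (p + 1))).
  - intros k. unfold B_term. rewrite Rplus_0_r, pow_add, pow_1. reflexivity.
  - apply is_series_zetabar. lia.
Qed.

Lemma is_series_B_term p r :
  (1 <= r)%nat ->
  is_series (B_term p r)
    (fsum (fun j => (-1) ^ (p - j) / INR r ^ (p - j + 1) * zetabar j) 1 p
     + (-1) ^ p / INR r ^ p * ((-1) ^ r * (zetabar 1 - Hbar 1 r))).
Proof.
  intros Hr. assert (Hr0 : 0 < INR r) by (apply lt_0_INR; lia).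
  apply (is_series_ext_R (fun k =>
    fsum (fun j => (-1) ^ (p - j) / INR r ^ (p - j + 1) * ((-1) ^ k / INR (k + 1) ^ j)) 1 p
    + (-1) ^ p / INR r ^ p * ((-1) ^ k / (INR (k + 1) + INR r)))).
  - intros k. pose proof (INR_add_1_pos k) as Hk.
    symmetry. unfold B_term, Rdiv at 1. rewrite inv_pow_mul_partial_fractions by lra.
    rewrite Rmult_plus_distr_l, <- fsum_scal. f_equal.
    + apply fsum_ext. intros j _. unfold Rdiv. ring.
    + unfold Rdiv. ring.
  - apply (is_series_plus _ _
      (fsum (fun j => (-1) ^ (p - j) / INR r ^ (p - j + 1) * zetabar j) 1 p)
      ((-1) ^ p / INR r ^ p * ((-1) ^ r * (zetabar 1 - Hbar 1 r)))).
    + apply is_series_fsum. intros j Hj.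
      apply (is_series_scal ((-1) ^ (p - j) / INR r ^ (p - j + 1)) _ (zetabar j)).
      apply is_series_zetabar. lia.
    + apply (is_series_scal ((-1) ^ p / INR r ^ p) _ ((-1) ^ r * (zetabar 1 - Hbar 1 r))).
      apply is_series_alt_inv_add.
Qed.

Lemma is_series_S_term_0 p : (1 <= p)%nat -> is_series (S_term p 0) (Spm p 1).
Proof.
  intros Hp. apply (is_series_ext_R (fun k => (-1) ^ k * H p (k + 1) / INR (k + 1) ^ 1)).
  - intros k. unfold S_term. rewrite pow_m1_add_2, pow_1, Rplus_0_r. reflexivity.
  - exact (is_series_Spm p Hp).
Qed.

Lemma is_series_S_term_S p r (t b : R) :
  is_series (S_term p r) t -> is_series (B_term p r) b ->
  is_series (S_term p (S r)) (- t + b).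
Proof.
  intros Ht Hb. apply is_series_shift in Ht, Hb. apply (is_series_opp _ _) in Ht.
  pose proof (pos_INR r) as Hr.
  (* both series start with [1 / (r + 1)] *)
  replace (- t + b) with (- (t - S_term p r 0) + (b - B_term p r 0)).
  2:{ unfold S_term, B_term. simpl. rewrite pow1. field. lra. }
  apply (is_series_ext_R (fun k => - S_term p r (S k) + B_term p r (S k))).
  - intros k. unfold S_term, B_term.
    rewrite !pow_m1_add_2, Nat.add_succ_l, H_S, !S_INR. simpl pow.
    pose proof (INR_add_1_pos k) as Hk.
    assert ((INR (k + 1) + 1) ^ p <> 0) by (apply pow_nonzero; lra).
    field. lra.
  - exact (is_series_plus _ _ _ _ Ht Hb).
Qed.

Lemma fsum_sign_Hbar_S (z : nat -> R) p s :
  fsum (fun j => (-1) ^ (p - j + S (S s)) * z j * Hbar (p - j + 1) (S s)) 1 p =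
  - fsum (fun j => (-1) ^ (p - j + S s) * z j * Hbar (p - j + 1) s) 1 p
  + fsum (fun j => (-1) ^ (p - j) / INR (S s) ^ (p - j + 1) * z j) 1 p.
Proof.
  rewrite <- fsum_opp, <- fsum_plus.
  apply fsum_ext. intros j _.
  rewrite Hbar_S, !(pow_add (-1) (p - j)).
  assert (HX : INR (S s) ^ (p - j + 1) <> 0)
    by (apply pow_nonzero; rewrite S_INR; pose proof (pos_INR s); lra).
  pose proof (pow_m1_mult_self s) as Hsq.
  set (X := INR (S s) ^ (p - j + 1)) in *. set (q := (-1) ^ s) in *. set (a := (-1) ^ (p - j)).
  simpl pow. fold q. clearbody X q a.
  apply Rminus_diag_uniq. transitivity (a * z j * (q * q - 1) / X).
  - field. exact HX.
  - rewrite Hsq. field. exact HX.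
Qed.

Lemma is_series_S_term_closed_form p s :
  (1 <= p)%nat ->
  is_series (S_term p (S s))
    ((-1) ^ S s * Spm p 1
     + (-1) ^ s * zetabar (p + 1)
     + fsum (fun j => (-1) ^ (p - j + S s) * zetabar j * Hbar (p - j + 1) s) 1 p
     + (-1) ^ (p + s) * zetabar 1 * H p s
     + (-1) ^ (p + S s) * fsum (fun n => Hbar 1 n / INR n ^ p) 1 s).
Proof.
  intros Hp. induction s as [|s IH].
  - pose proof (is_series_S_term_S p 0 _ _ (is_series_S_term_0 p Hp) (is_series_B_term_0 p)) as Hs.
    refine (@eq_ind R _ (is_series (S_term p 1)) Hs _ _).
    rewrite (fsum_ext _ (fun _ => 0)), fsum_zero by (intros; simpl; ring).
    rewrite fsum_empty by lia. simpl. ring.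
  - assert (Hb : (1 <= S s)%nat) by lia.
    pose proof (is_series_S_term_S p (S s) _ _ IH (is_series_B_term p (S s) Hb)) as Hs.
    refine (@eq_ind R _ (is_series (S_term p (S (S s)))) Hs _ _).
    rewrite fsum_sign_Hbar_S, fsum_S, H_S by lia.
    assert (INR (S s) ^ p <> 0) by (apply pow_nonzero, not_0_INR; lia).
    rewrite !pow_add. simpl pow.
    field. assumption.
Qed.

Theorem lemma3 (p r : nat) (hp : (1 <= p)%nat) (hr : (1 <= r)%nat) :
  is_series (S_term p r)
    ((-1) ^ r * Spm p 1
     + (-1) ^ (r - 1) * zetabar (p + 1)
     + fsum (fun j => (-1) ^ (p - j + r) * zetabar j * Hbar (p - j + 1) (r - 1)) 1 p
     + (-1) ^ (p + r - 1) * zetabar 1 * H p (r - 1)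
     + (-1) ^ (p + r) * fsum (fun n => Hbar 1 n / (INR n) ^ p) 1 (r - 1)).
Proof.
  destruct r as [|s]; [lia|].
  replace (S s - 1)%nat with s by lia.
  replace (p + S s - 1)%nat with (p + s)%nat by lia.
  exact (is_series_S_term_closed_form p s hp).
Qed.
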